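(* Let $K\ge2$, $p\in(0,1)$. Then $$J_*^{\mathrm{OA}}:=\sup_{\lambda\in\mathcal P(\mathcal S)}\ \inf_{\sigma\neq\mathrm{id}}\ D_\lambda\big(f^{\mathrm{OA}}_{\mathrm{id}}\,\|\,f^{\mathrm{OA}}_\sigma\big)=\log\!\Big(\frac1p\Big)\cdot\frac{1-p}{K-1+p},$$ where the infimum is over all bijections $\sigma:[K]\to[K]$ other than the identity. Moreover, the supremum is attained at $$\lambda^*(S)=\begin{cases}\dfrac{1-p^{K-n+1}}{K-1+p}&\text{if }S=\{n,n+1,\dots,K\}\text{ for some }n\in\{2,\dots,K-1\},\\[2mm]\dfrac{1-p^K}{(1-p)(K-1+p)}&\text{if }S=[K],\\[2mm] 0&\text{otherwise.}\end{cases}$$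
   Context: Items are $[K]=\{1,\dots,K\}$, $\mathcal S=\{S\subseteq[K]:|S|\ge2\}$, and $\mathcal P(\mathcal S)$ is the set of probability distributions on $\mathcal S$. For a bijection $\sigma:[K]\to[K]$, $S\in\mathcal S$, $i\in S$, let $\sigma(i\mid S)=1+|\{j\in S:\sigma(j)<\sigma(i)\}|$ (local rank) and define the Ordinal Attraction preference $f^{\mathrm{OA}}_\sigma(i\mid S)=\frac{1-p}{1-p^{|S|}}p^{\sigma(i\mid S)-1}$ for $i\in S$. For preferences $f,f'$ (families of positive probability vectors $f(\cdot\mid S)$ on each $S$), $D_S(f\|f')=\sum_{i\in S}f(i\mid S)\log\frac{f(i\mid S)}{f'(i\mid S)}$ and $D_\lambda(f\|f')=\sum_{S\in\mathcal S}\lambda(S)D_S(f\|f')$. *)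

From HB Require Import structures.
From mathcomp Require Import all_boot all_order all_algebra all_fingroup.
From mathcomp Require Import all_classical all_reals exp.
Set Implicit Arguments. Unset Strict Implicit. Unset Printing Implicit Defensive.
Import Order.TTheory GRing.Theory Num.Theory.
Local Open Scope ring_scope.

(* Items [K] = {1,...,K} are represented by 'I_K (item i+1 <-> ordinal i).
   A bijection sigma : [K] -> [K] is a permutation {perm 'I_K}; only the
   relative order of values matters for local ranks. *)

Section OA.
Variables (R : realType) (K : nat).

Definition local_rank (s : {perm 'I_K}) (S : {set 'I_K}) (i : 'I_K) : nat :=
  (1 + #|[set j in S | (s j < s i)%N]|)%N.

Definition fOA (p : R) (s : {perm 'I_K}) (S : {set 'I_K}) (i : 'I_K) : R :=
  (1 - p) / (1 - p ^+ #|S|) * p ^+ (local_rank s S i).-1.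

Definition DS (f f' : {set 'I_K} -> 'I_K -> R) (S : {set 'I_K}) : R :=
  \sum_(i in S) f S i * ln (f S i / f' S i).

Definition Dlam (lam : {set 'I_K} -> R) (f f' : {set 'I_K} -> 'I_K -> R) : R :=
  \sum_(S : {set 'I_K} | (2 <= #|S|)%N) lam S * DS f f' S.

Definition is_distr (lam : {set 'I_K} -> R) : Prop :=
  (forall S : {set 'I_K}, 0 <= lam S) /\ (forall S : {set 'I_K}, (#|S| < 2)%N -> lam S = 0) /\
  \sum_(S : {set 'I_K} | (2 <= #|S|)%N) lam S = 1.

Definition Jinf (p : R) (lam : {set 'I_K} -> R) : R :=
  inf ((fun s : {perm 'I_K} => Dlam lam (fOA p 1%g) (fOA p s))
         @` [set s | s != 1%g])%classic.

Definition Jstar (p : R) : R :=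
  sup [set J | exists lam, is_distr lam /\ J = Jinf p lam]%classic.

(* lambda^*: S = {n,...,K} with n in {2,...,K-1}: in ordinals, S = {i | n-1 <= i};
   writing m = n-1 (an ordinal), the condition is 2 <= m+1 <= K-1 and the
   exponent K-n+1 = K - m. *)
Definition lamstar (p : R) (S : {set 'I_K}) : R :=
  if S == [set: 'I_K] then (1 - p ^+ K) / ((1 - p) * (K%:R - 1 + p))
  else match [pick m : 'I_K | (2 <= m.+1 <= K - 1)%N && (S == [set i : 'I_K | (m <= i)%N])] with
       | Some m => (1 - p ^+ (K - m)) / (K%:R - 1 + p)
       | None => 0
       end.

End OA.

(* Writing c_S = (1 - p) / (1 - p^|S|) and r_S(i) for the rank of i in S, the
   divergence D_S(f_id || f_s) equals ln(1/p) c_S times the sum of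
   p^(r_S i) - p^(r_S j) over the pairs i < j of S inverted by s: the rank
   difference of i is a sum over j of an antisymmetric kernel, so only inverted
   pairs survive.

   Upper bound: the adjacent transposition (k k+1) has the single inversion
   (k, k+1), so its divergence on S is ln(1/p) (1 - p) f_id(k|S) when k and k+1
   both lie in S.  Weighting these transpositions by 1, except the last one by
   1 + p, the weighted divergences on S add up to at most ln(1/p) (1 - p) times
   the total mass of f_id(.|S); hence for every lambda one of them has
   D_lambda <= ln(1/p) (1 - p) / (K - 1 + p).

   Lower bound: lambda* lives on the tails T_m = {m, ..., K}, and
   lambda*(T_m) c_(T_m) (K - 1 + p) is 1 for m = 1 and 1 - p otherwise.  An
   inversion (i, j) of s is seen by every tail containing i, with weight
   p^(i-m) (1 - p^(j-i)); these weights telescope to 1 - p^(j-i) >= 1 - p. *)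

From HB Require Import structures.
From mathcomp Require Import all_boot all_order all_algebra all_fingroup.
From mathcomp Require Import all_classical all_reals exp.
From mathcomp Require Import ring lra zify.
Set Implicit Arguments. Unset Strict Implicit. Unset Printing Implicit Defensive.
Import Order.TTheory GRing.Theory Num.Theory.
Local Open Scope ring_scope.

Lemma sum_mul_eq1 (R : pzSemiRingType) (T : finType) (A : {pred T}) (F : T -> R) a :
  \sum_(i in A) F i * (i == a)%:R = (a \in A)%:R * F a.
Proof.
case: (boolP (a \in A)) => aA; last first.
  rewrite mul0r big1 // => i iA.
  by rewrite (_ : (i == a) = false) ?mulr0 //; apply: contraNF aA => /eqP <-.
rewrite (bigD1 a) //= eqxx mulr1 mul1r big1 ?addr0 // => i /andP[_ /negbTE ->].
by rewrite mulr0.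
Qed.

Lemma exists_le_wavg (R : realDomainType) (I : finType) (i0 : I) (w x : I -> R) :
  (forall i, 0 <= w i) -> exists i, x i * \sum_j w j <= \sum_j w j * x j.
Proof.
move=> w_ge0; exists [arg min_(i < i0) x i]%O.
case: arg_minP => // i _ min_i; rewrite mulr_sumr; apply: ler_sum => j _.
by rewrite mulrC ler_wpM2l ?min_i.
Qed.

Section LocalRanks.
Variable K : nat.
Implicit Types (s : {perm 'I_K}) (S : {set 'I_K}) (i j : 'I_K).

Definition lrank s S i : nat := #|[set j in S | (s j < s i)%N]|.

Lemma local_rankE s S i : local_rank s S i = (lrank s S i).+1.
Proof. by rewrite /local_rank add1n. Qed.

Lemma card_ord_range (a b : nat) :
  (b <= K)%N -> #|[set i : 'I_K | (a <= i < b)%N]| = (b - a)%N.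
Proof.
move=> bK; rewrite -sum1_card (eq_bigl (fun i : 'I_K => (a <= i) && (i < b))%N);
  last by move=> i; rewrite inE.
rewrite -(@big_ord_widen_cond _ _ _ b K (fun k => a <= k)%N (fun _ => 1%N) bK).
by rewrite -[RHS]muln1 -sum_nat_const_nat big_geq_mkord.
Qed.

(* tail m is {m+1, ..., K} in the 1-based numbering of the statement. *)
Definition tail (m : nat) : {set 'I_K} := [set i : 'I_K | (m <= i)%N].

Lemma card_tail m : (m <= K)%N -> #|tail m| = (K - m)%N.
Proof.
move=> mK; rewrite -(card_ord_range m (leqnn K)).
by apply: eq_card => i; rewrite !inE ltn_ord andbT.
Qed.

Lemma lrank1_tail m i : lrank 1%g (tail m) i = (i - m)%N.
Proof.
rewrite /lrank -(card_ord_range m (ltnW (ltn_ord i))).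
by apply: eq_card => j; rewrite !inE !perm1.
Qed.

Lemma tail0 : tail 0 = [set: 'I_K].
Proof. by apply/setP => i; rewrite !inE. Qed.

Lemma tail_inj m m' : (m <= K)%N -> (m' <= K)%N -> tail m = tail m' -> m = m'.
Proof. by move=> mK m'K /(congr1 (fun S => #|S|)); rewrite !card_tail //; lia. Qed.

Lemma lrank_ltn s S i j : i \in S -> (s i < s j)%N -> (lrank s S i < lrank s S j)%N.
Proof.
move=> iS ltij; apply: proper_card; apply/properP; split.
  by apply/fintype.subsetP => k; rewrite !inE => /andP[-> /ltn_trans]; apply.
by exists i; rewrite !inE ?iS ?ltij // ltnn andbF.
Qed.

Lemma lrank_lt_card s S i : i \in S -> (lrank s S i < #|S|)%N.
Proof.
move=> iS; apply: proper_card; apply/properP; split.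
  by apply/fintype.subsetP => k; rewrite inE => /andP[].
by exists i; rewrite // inE ltnn andbF.
Qed.

Lemma lrank_inj s S : {in S &, injective (lrank s S)}.
Proof.
move=> i j iS jS eq_ij.
have [/(lrank_ltn iS)|/(lrank_ltn jS)|/val_inj/perm_inj //] := ltngtP (s i) (s j);
  by rewrite eq_ij ltnn.
Qed.

Lemma perm_lrank s S : perm_eq [seq lrank s S i | i <- enum S] (iota 0 #|S|).
Proof.
have uniq_rk : uniq [seq lrank s S i | i <- enum S].
  by rewrite map_inj_in_uniq ?enum_uniq // => i j; rewrite !mem_enum; apply: lrank_inj.
apply: uniq_perm => //; first exact: iota_uniq.
apply: (uniq_min_size uniq_rk _ _).2 => [k|]; last by rewrite size_map size_iota cardE.
by move=> /mapP[i]; rewrite mem_enum mem_iota => iS ->; rewrite lrank_lt_card.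
Qed.

Lemma sum_lrank (V : nmodType) (F : nat -> V) s S :
  \sum_(i in S) F (lrank s S i) = \sum_(k < #|S|) F k.
Proof.
rewrite -big_enum -(big_map (lrank s S) xpredT) (perm_big _ (perm_lrank s S)).
by rewrite -(big_mkord xpredT) /index_iota subn0.
Qed.

Lemma lrank1_le S i j : (i <= j)%N -> (lrank 1%g S i <= lrank 1%g S j)%N.
Proof.
move=> le_ij; apply: subset_leq_card; apply/fintype.subsetP => k.
by rewrite !inE !perm1 => /andP[-> /leq_trans]; apply.
Qed.

Lemma lrank1_succ S (a b : 'I_K) :
  b = a.+1 :> nat -> lrank 1%g S b = (lrank 1%g S a + (a \in S))%N.
Proof.
move=> bE; rewrite /lrank (cardsD1 a) addnC !inE !perm1 bE ltnSn andbT.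
congr (_ + _)%N; apply: eq_card => j; rewrite !inE !perm1 ltnS ltn_neqAle val_eqE.
by case: (j \in S); case: (j == a).
Qed.

Lemma perm_incr_eq1 s : {homo s : i j / (i < j)%N} -> s = 1%g.
Proof.
move=> s_incr; apply/permP => i; apply: val_inj; rewrite perm1 /=.
have lt_s j : (s j < s i)%N = (j < i)%N.
  case: (ltngtP j i) => [/s_incr -> // | /s_incr/ltnW | /val_inj ->].
    by rewrite leqNgt => /negbTE.
  by rewrite !ltnn.
rewrite -[LHS]subn0 -[RHS]subn0 -!(card_ord_range 0 (ltnW (ltn_ord _))).
rewrite -(card_preimset _ (@perm_inj _ s)).
by apply: eq_card => j; rewrite !inE lt_s.
Qed.

Lemma perm_inversion s : s != 1%g -> exists i j, (i < j)%N /\ (s j < s i)%N.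
Proof.
move/eqP; apply: contra_notP => no_inv; apply: perm_incr_eq1 => i j lt_ij.
case: (ltngtP (s i) (s j)) => // [lt_sji | /val_inj/perm_inj eq_ij].
  by case: no_inv; exists i, j.
by move: lt_ij; rewrite eq_ij ltnn.
Qed.

Lemma tperm_adj_ltn (a b i j : 'I_K) : b = a.+1 :> nat -> (i < j)%N ->
  (tperm a b j < tperm a b i)%N = (i == a) && (j == b).
Proof.
have val_neq (x y : 'I_K) : x <> y -> (x : nat) <> y by move=> neq /val_inj.
move=> bE; rewrite -!val_eqE /=.
case: (tpermP a b j) => [->|->|/val_neq ja /val_neq jb];
  case: (tpermP a b i) => [->|->|/val_neq ia /val_neq ib] lt_ij; apply/idP/idP; lia.
Qed.

End LocalRanks.

Arguments tail {K}.

Section Divergence.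
Variables (R : realType) (K : nat) (p : R).
Hypotheses (p_gt0 : 0 < p) (p_lt1 : p < 1).
Implicit Types (s : {perm 'I_K}) (S : {set 'I_K}) (i j : 'I_K).

Lemma fOAE s S i : fOA p s S i = (1 - p) / (1 - p ^+ #|S|) * p ^+ lrank s S i.
Proof. by rewrite /fOA local_rankE. Qed.

Lemma ln_invp_gt0 : 0 < ln p^-1.
Proof. by rewrite ln_gt0 // invf_gt1. Qed.

Lemma subrX_ge0 k : 0 <= 1 - p ^+ k.
Proof. by rewrite subr_ge0 exprn_ile1 ?ltW. Qed.

Lemma subrX_gt0 k : (0 < k)%N -> 0 < 1 - p ^+ k.
Proof. by move=> k_gt0; rewrite subr_gt0 exprn_ilt1 ?ltW // -lt0n. Qed.

Lemma subrX_geom k : 1 - p ^+ k = (1 - p) * \sum_(t < k) p ^+ t.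
Proof. by apply: oppr_inj; rewrite !opprB subrX1 -mulNr opprB. Qed.

Lemma sum_fOA s S : (0 < #|S|)%N -> \sum_(i in S) fOA p s S i = 1.
Proof.
move=> S_gt0; under eq_bigr do rewrite fOAE.
rewrite -mulr_sumr (sum_lrank (fun k => p ^+ k)) mulrAC -subrX_geom.
by rewrite mulfV // gt_eqF // subrX_gt0.
Qed.

Lemma lrankE s S i : (lrank s S i)%:R = \sum_(j in S) ((s j < s i)%N)%:R :> R.
Proof.
rewrite /lrank -sum1_card natr_sum big_mkcond [RHS]big_mkcond.
by apply: eq_bigr => j _; rewrite !inE; case: (j \in S); case: (s j < s i)%N.
Qed.

Lemma fOA_ge0 s S i : 0 <= fOA p s S i.
Proof.
rewrite fOAE mulr_ge0 ?divr_ge0 ?subrX_ge0 //; last exact: exprn_ge0 (ltW p_gt0).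
by rewrite subr_ge0 ltW.
Qed.

Lemma fOA1_succ S (a b : 'I_K) : b = a.+1 :> nat -> a \in S ->
  fOA p 1%g S b = p * fOA p 1%g S a.
Proof. by move=> bE aS; rewrite !fOAE (lrank1_succ S bE) aS addn1 exprS mulrCA. Qed.

Lemma ln_fOA_ratio s S i : i \in S ->
  ln (fOA p 1%g S i / fOA p s S i) = ln p^-1 * ((lrank s S i)%:R - (lrank 1%g S i)%:R).
Proof.
move=> iS; have c_gt0 : 0 < (1 - p) / (1 - p ^+ #|S|).
  have S_gt0 : (0 < #|S|)%N by apply/card_gt0P; exists i.
  by rewrite divr_gt0 ?subrX_gt0 // subr_gt0.
rewrite !fOAE invfM mulrACA mulfV ?gt_eqF // mul1r.
rewrite ln_div ?posrE ?exprn_gt0 // !lnXn // lnV ?posrE //.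
by rewrite mulrBr !mulNr opprK !mulr_natr addrC.
Qed.

Lemma sum_antisym S (g : 'I_K -> R) (a : 'I_K -> 'I_K -> R) :
  (forall i j, a j i = - a i j) ->
  \sum_(i in S) \sum_(j in S) g i * a i j =
  \sum_(i in S) \sum_(j in S | (i < j)%N) (g i - g j) * a i j.
Proof.
move=> aN; have a0 i : a i i = 0 by have := aN i i; lra.
have split_j i : \sum_(j in S) g i * a i j =
    \sum_(j in S | (i < j)%N) g i * a i j + \sum_(j in S | (j < i)%N) g i * a i j.
  rewrite (bigID (fun j => (i < j)%N)) /=; congr (_ + _).
  rewrite (bigID (fun j => (j < i)%N)) /= [X in _ + X]big1 ?addr0 => [|j].
    by apply: eq_bigl => j; case: ltngtP; rewrite ?andbT ?andbF.
  by case: ltngtP; rewrite ?andbF // => /val_inj ->; rewrite a0 mulr0.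
rewrite (eq_bigr _ (fun i _ => split_j i)) big_split /=.
rewrite [X in _ + X](exchange_big_dep (fun j => j \in S)) /=; last by move=> i j _ /andP[].
have -> : \sum_(j in S) \sum_(i | (i \in S) && ((j \in S) && (j < i)%N)) g i * a i j =
    - \sum_(i in S) \sum_(j in S | (i < j)%N) g j * a i j.
  rewrite -sumrN; apply: eq_bigr => i iS; rewrite -sumrN.
  by apply: eq_big => [j | j _]; rewrite ?iS // aN mulrN.
rewrite -sumrB; apply: eq_bigr => i _; rewrite -sumrB.
by apply: eq_bigr => j _; rewrite mulrBl.
Qed.

Definition inv_weight s S : R :=
  \sum_(i in S) \sum_(j in S | (i < j)%N)
    (p ^+ lrank 1%g S i - p ^+ lrank 1%g S j) * ((s j < s i)%N)%:R.

Lemma DS_fOA s S : DS (fOA p 1%g) (fOA p s) S =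
  ln p^-1 * ((1 - p) / (1 - p ^+ #|S|)) * inv_weight s S.
Proof.
pose a i j : R := ((s j < s i)%N)%:R - ((j < i)%N)%:R.
have ltn_sym (x y : nat) : ((x < y)%N%:R + (y < x)%N%:R : R) = (x != y)%:R.
  by case: ltngtP; rewrite /= ?addr0 ?add0r.
have aN i j : a j i = - a i j.
  apply/eqP; rewrite -addr_eq0 /a addrACA -opprD !ltn_sym val_eqE.
  by rewrite (inj_eq perm_inj) val_eqE subrr.
have -> : inv_weight s S = \sum_(i in S) \sum_(j in S) p ^+ lrank 1%g S i * a i j.
  rewrite sum_antisym //; apply: eq_bigr => i _; apply: eq_bigr => j /andP[_ lt_ij].
  by rewrite /a (leq_gtF (ltnW lt_ij)) subr0.
rewrite /DS mulr_sumr; apply: eq_bigr => i iS.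
rewrite ln_fOA_ratio // fOAE !lrankE -sumrB -mulr_sumr.
under eq_bigr do rewrite !perm1.
by rewrite /a; ring.
Qed.

Lemma exp_lrank1_le S i j : (i <= j)%N -> p ^+ lrank 1%g S j <= p ^+ lrank 1%g S i.
Proof. by move=> le_ij; rewrite ler_wiXn2l ?ltW ?lrank1_le. Qed.

Lemma inv_weight_term_ge0 s S i j : (i < j)%N ->
  0 <= (p ^+ lrank 1%g S i - p ^+ lrank 1%g S j) * ((s j < s i)%N)%:R.
Proof. by move=> lt_ij; rewrite mulr_ge0 // subr_ge0 exp_lrank1_le // ltnW. Qed.

Lemma inv_weight_ge0 s S : 0 <= inv_weight s S.
Proof.
apply: sumr_ge0 => i _; apply: sumr_ge0 => j /andP[_ lt_ij].
exact: inv_weight_term_ge0.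
Qed.

Lemma inv_weight_ge_pair s S i j : i \in S -> j \in S -> (i < j)%N -> (s j < s i)%N ->
  p ^+ lrank 1%g S i - p ^+ lrank 1%g S j <= inv_weight s S.
Proof.
move=> iS jS lt_ij lt_sji; rewrite /inv_weight (bigD1 i) //= (bigD1 j) /=; last by rewrite jS.
rewrite lt_sji mulr1 -addrA lerDl addr_ge0 //.
  by apply: sumr_ge0 => k /andP[/andP[_ lt_ik] _]; apply: inv_weight_term_ge0.
apply: sumr_ge0 => k _; apply: sumr_ge0 => l /andP[_ lt_kl].
exact: inv_weight_term_ge0.
Qed.

Lemma DS_fOA_ge0 s S : 0 <= DS (fOA p 1%g) (fOA p s) S.
Proof.
have c_ge0 : 0 <= (1 - p) / (1 - p ^+ #|S|) by rewrite divr_ge0 ?subrX_ge0 // subr_ge0 ltW.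
by rewrite DS_fOA mulr_ge0 ?inv_weight_ge0 // mulr_ge0 // ltW // ln_invp_gt0.
Qed.

Lemma Jinf_le_Dlam lam s : (forall S, 0 <= lam S) -> s != 1%g ->
  Jinf p lam <= Dlam lam (fOA p 1%g) (fOA p s).
Proof.
move=> lam_ge0 s1; apply: ge_inf; last by exists s.
exists 0 => _ [t _ <-]; apply: sumr_ge0 => S _.
by rewrite mulr_ge0 ?DS_fOA_ge0.
Qed.

Lemma le_Jinf lam v s0 : s0 != 1%g ->
  (forall s, s != 1%g -> v <= Dlam lam (fOA p 1%g) (fOA p s)) -> v <= Jinf p lam.
Proof.
move=> s01 v_le; apply: lb_le_inf; first by exists (Dlam lam (fOA p 1%g) (fOA p s0)), s0.
by move=> _ [s s1 <-]; apply: v_le.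
Qed.

End Divergence.

Section Extremal.
Variables (R : realType) (n : nat) (p : R).
Hypotheses (p_gt0 : 0 < p) (p_lt1 : p < 1).
Local Notation K := n.+2.
Local Notation fid := (fOA p (1%g : {perm 'I_K})).
Local Notation tail m := (@tail K m).
Local Notation den := (n.+1%:R + p).
Local Notation J_opt := (ln p^-1 * ((1 - p) / den)).
Local Notation lo k := (widen_ord (leqnSn _) k).
Local Notation hi k := (lift ord0 k).
Implicit Types (s : {perm 'I_K}) (S : {set 'I_K}) (k : 'I_n.+1).

Definition adj k : {perm 'I_K} := tperm (lo k) (hi k).

Lemma adj_neq1 k : adj k != 1%g.
Proof.
apply/eqP => /permP/(_ (lo k)); rewrite tpermL perm1.
by move/(congr1 (@nat_of_ord _)); rewrite lift0 /=; lia.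
Qed.

Lemma DS_adj k S : DS fid (fOA p (adj k)) S =
  ln p^-1 * (1 - p) * (((lo k \in S) && (hi k \in S))%:R * fid S (lo k)).
Proof.
set a := lo k; set b := hi k.
have bE : b = a.+1 :> nat by rewrite lift0.
rewrite DS_fOA //.
have -> : inv_weight p (adj k) S = \sum_(i in S) (\sum_(j in S | (i < j)%N)
    (p ^+ lrank 1%g S i - p ^+ lrank 1%g S j) * (j == b)%:R) * (i == a)%:R.
  apply: eq_bigr => i _; rewrite mulr_suml; apply: eq_bigr => j /andP[_ lt_ij].
  by rewrite tperm_adj_ltn // -mulnb natrM mulrA mulrAC.
rewrite sum_mul_eq1 sum_mul_eq1 [b \in _]unfold_in /= /bump leq0n add1n ltnSn andbT.
case: (boolP (a \in S)) => aS; last by rewrite !mul0r !mulr0.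
rewrite (lrank1_succ S bE) aS addn1 exprS fOAE /= mul1r.
ring.
Qed.

(* The extra weight p on the last transposition turns its term
   p f_id(K-1|S) into f_id(K|S), the one item the other terms miss. *)
Definition adj_weight k : R := 1 + (k == ord_max)%:R * p.

Lemma sum_adj_weight : \sum_k adj_weight k = den.
Proof.
rewrite big_split /= sumr_const card_ord (bigD1 ord_max) //= eqxx mul1r.
by rewrite big1 ?addr0 // => k /negbTE ->; rewrite mul0r.
Qed.

Lemma sum_DS_adj_le S : (0 < #|S|)%N ->
  \sum_k adj_weight k * DS fid (fOA p (adj k)) S <= ln p^-1 * (1 - p).
Proof.
move=> S_gt0; under eq_bigr do rewrite DS_adj mulrCA.
have L_ge0 : 0 <= ln p^-1 * (1 - p).
  by apply: mulr_ge0; [exact: ltW (ln_invp_gt0 p_gt0 p_lt1) | rewrite subr_ge0 ltW].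
rewrite -mulr_sumr -[X in _ <= X]mulr1 ler_wpM2l //.
rewrite -[X in _ <= X](sum_fOA p_gt0 p_lt1 1%g S_gt0).
rewrite [X in _ <= X]big_mkcond [X in _ <= X]big_ord_recr /=.
under eq_bigr do rewrite mulrDl mul1r.
rewrite big_split /= lerD //.
  apply: ler_sum => k _; case: (_ \in S); case: (_ \in S);
    by rewrite /= ?mul1r ?mul0r ?fOA_ge0.
rewrite (bigD1 ord_max) //= big1 => [|k /negbTE ->]; last by rewrite !mul0r.
have hi_max : hi (ord_max : 'I_n.+1) = ord_max :> 'I_K by apply: ord_inj; rewrite lift0.
rewrite eqxx mul1r addr0 mulrCA -hi_max.
case: (boolP (_ \in S)) => loS; case: (boolP (_ \in S)) => hiS //=;
  rewrite ?mul0r ?mulr0 ?fOA_ge0 //.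
by rewrite mul1r (@fOA1_succ _ _ p S (lo ord_max) (hi ord_max)) ?lift0.
Qed.

Lemma den_gt0 : 0 < den.
Proof. by rewrite ltr_wpDl. Qed.

Lemma Jinf_le_optimum (lam : {set 'I_K} -> R) : is_distr lam -> Jinf p lam <= J_opt.
Proof.
move=> [lam_ge0 [_ lam_sum1]].
pose D k := Dlam lam fid (fOA p (adj k)).
have wsum_le : \sum_k adj_weight k * D k <= ln p^-1 * (1 - p).
  rewrite /D /Dlam; under eq_bigr do rewrite mulr_sumr; rewrite exchange_big /=.
  rewrite -[X in _ <= X]mul1r -[X in _ <= X * _]lam_sum1 mulr_suml.
  apply: ler_sum => S S_ge2.
  under eq_bigr do rewrite mulrCA; rewrite -mulr_sumr ler_wpM2l //.
  by apply: sum_DS_adj_le; apply: leq_trans S_ge2.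
have w_ge0 k : 0 <= adj_weight k by rewrite addr_ge0 // mulr_ge0 // ltW.
have [k le_k] := exists_le_wavg ord0 D w_ge0.
apply: le_trans (Jinf_le_Dlam p_gt0 p_lt1 lam_ge0 (adj_neq1 k)) _.
rewrite mulrA ler_pdivlMr ?den_gt0 // -sum_adj_weight.
exact: le_trans le_k wsum_le.
Qed.

Lemma natK_den : K%:R - 1 + p = den.
Proof. by rewrite -natr1 addrK. Qed.

Lemma lamstar_tail m : (m <= n)%N ->
  lamstar p (tail m) = (if m == 0%N then (1 - p ^+ K) / (1 - p) else 1 - p ^+ (K - m)) / den.
Proof.
move=> le_mn; rewrite /lamstar natK_den -tail0.
case: eqP => [tail_mT | tail_m].
  have -> : m = 0%N by apply: (tail_inj _ _ tail_mT); lia.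
  by rewrite /= invfM mulrA.
have m_neq0 : m != 0%N by apply: contra_not_neq tail_m => ->.
rewrite (negbTE m_neq0).
case: pickP => [m' /andP[_ /eqP tail_mm'] | none].
  by have m'K := ltn_ord m'; rewrite (tail_inj _ _ tail_mm') //; lia.
have mK : (m < K)%N by lia.
by have := none (Ordinal mK); rewrite /= (eqxx (tail m)) andbT; lia.
Qed.

Local Notation tails := [set tail m | m : 'I_n.+1].

Lemma lamstar_out S : S \notin tails -> lamstar p S = 0.
Proof.
move=> /imsetP S_out; rewrite /lamstar; case: eqP => [S_T | _].
  by case: S_out; exists ord0; rewrite // S_T tail0.
case: pickP => [m /andP[m_range /eqP S_m] | //].
have m_lt : (m < n.+1)%N by lia.
by case: S_out; exists (Ordinal m_lt).
Qed.

Lemma card_tails S : S \in tails -> (2 <= #|S|)%N.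
Proof. by case/imsetP => m _ ->; rewrite card_tail; have := ltn_ord m; lia. Qed.

Lemma sum_lamstar (F : {set 'I_K} -> R) :
  \sum_(S : {set 'I_K} | (2 <= #|S|)%N) lamstar p S * F S =
  \sum_(m < n.+1) lamstar p (tail m) * F (tail m).
Proof.
rewrite (bigID (mem tails)) /= [X in _ + X]big1 ?addr0 => [|S /andP[_ S_out]]; last first.
  by rewrite lamstar_out ?mul0r.
rewrite (eq_bigl (mem tails)) => [|S]; last by rewrite andb_idl //; apply: card_tails.
rewrite big_imset //= => m m' _ _ /tail_inj eq_mm'.
by apply/ord_inj/eq_mm'; [have := ltn_ord m | have := ltn_ord m']; lia.
Qed.

Definition tail_weight (m : nat) : R := if m == 0%N then 1 else 1 - p.

Lemma lamstar_tail_norm m : (m <= n)%N ->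
  lamstar p (tail m) * ((1 - p) / (1 - p ^+ #|tail m|)) = tail_weight m / den.
Proof.
move=> le_mn; have den_neq0 := lt0r_neq0 den_gt0.
have subp_neq0 : 1 - p != 0 by rewrite subr_eq0 gt_eqF.
have subpK_neq0 : 1 - p ^+ (K - m) != 0 by apply: lt0r_neq0; apply: subrX_gt0 => //; lia.
rewrite lamstar_tail // card_tail; last by lia.
set d := den in den_neq0 *; rewrite /tail_weight.
case: (posnP m) subpK_neq0 => [-> | _]; rewrite ?subn0 => subpK_neq0.
  by field; rewrite den_neq0 subp_neq0 subpK_neq0.
by field; rewrite den_neq0 subpK_neq0.
Qed.

Lemma sum_lamstar_tails : \sum_(m < n.+1) lamstar p (tail m) = 1.
Proof.
have subp_neq0 : 1 - p != 0 by rewrite subr_eq0 gt_eqF.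
rewrite -(big_mkord xpredT (fun m => lamstar p (tail m))) big_ltn // lamstar_tail //=.
rewrite (eq_big_nat _ _ (F2 := fun m => (1 - p ^+ (K - m)) / den)) => [|m /andP[m_gt0 m_lt]];
  last by rewrite lamstar_tail -1?ltnS // (negbTE (lt0n_neq0 m_gt0)).
rewrite -mulr_suml -mulrDl -[X in _ = X](divff (lt0r_neq0 den_gt0)); congr (_ / _).
rewrite subrX_geom mulrAC mulfV // mul1r -(big_mkord xpredT) (big_cat_nat _ (n := 2)) //=.
rewrite sumrB sumr_const_nat subn1 /=.
have -> : \sum_(1 <= m < n.+1) p ^+ (K - m) = \sum_(2 <= t < K) p ^+ t.
  rewrite big_nat_rev !big_add1 /=; apply: eq_big_nat => m /andP[_ m_lt].
  by congr (_ ^+ _); lia.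
rewrite big_ltn // big_ltn // big_geq // expr0 expr1 addr0 -natr1.
ring.
Qed.

Lemma lamstar_distr : is_distr (@lamstar R K p).
Proof.
have lamstar_tail_ge0 m : (m <= n)%N -> 0 <= lamstar p (tail m).
  move=> le_mn; rewrite lamstar_tail // divr_ge0 ?(ltW den_gt0) //.
  by case: eqP => _; rewrite ?divr_ge0 ?subrX_ge0 // subr_ge0 ltW.
split; [|split].
- move=> S; case: (boolP (S \in tails)) => [/imsetP[m _ ->] | /lamstar_out -> //].
  by apply: lamstar_tail_ge0; rewrite -ltnS.
- move=> S S_lt2; apply: lamstar_out; apply: contraTN S_lt2 => /card_tails; lia.
rewrite -sum_lamstar_tails; under eq_bigr do rewrite -[lamstar _ _]mulr1.
by rewrite sum_lamstar; under eq_bigr do rewrite mulr1.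
Qed.

Lemma tail_weight_ge0 m : 0 <= tail_weight m.
Proof. by rewrite /tail_weight; case: eqP; rewrite // subr_ge0 ltW. Qed.

Lemma sum_tail_weight i : \sum_(0 <= m < i.+1) tail_weight m * p ^+ (i - m) = 1.
Proof.
elim: i => [|i IH]; first by rewrite big_nat1 /tail_weight /= expr0 mulr1.
rewrite big_nat_recr //= subnn expr0 mulr1 /tail_weight /=.
rewrite (eq_big_nat _ _ (F2 := fun m => p * (tail_weight m * p ^+ (i - m)))) => [|m /andP[_ m_le]].
  by rewrite -mulr_sumr IH mulr1 addrC subrK.
by rewrite subSn // exprS mulrCA.
Qed.

Lemma Dlam_lamstar s : Dlam (lamstar p) fid (fOA p s) =
  ln p^-1 / den * \sum_(m < n.+1) tail_weight m * inv_weight p s (tail m).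
Proof.
rewrite /Dlam sum_lamstar mulr_sumr; apply: eq_bigr => m _; rewrite DS_fOA //.
transitivity (ln p^-1 * (lamstar p (tail m) * ((1 - p) / (1 - p ^+ #|tail m|))) *
  inv_weight p s (tail m)); first by ring.
by rewrite lamstar_tail_norm -1?ltnS //; ring.
Qed.

(* An inversion (i, j) of s is seen by the tails m <= i, whose weights
   telescope (sum_tail_weight) to 1 - p^(j-i). *)
Lemma Dlam_lamstar_ge s : s != 1%g ->
  J_opt <= Dlam (lamstar p) fid (fOA p s).
Proof.
move=> s1; have [i [j [lt_ij lt_sji]]] := perm_inversion s1.
have le_in : (i <= n)%N by have := ltn_ord j; lia.
have -> : J_opt = ln p^-1 / den * (1 - p) by ring.
rewrite Dlam_lamstar ler_wpM2l ?divr_ge0 ?(ltW den_gt0) ?(ltW (ln_invp_gt0 p_gt0 p_lt1)) //.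
rewrite -(big_mkord xpredT (fun m => tail_weight m * inv_weight p s (tail m))).
rewrite (big_cat_nat _ (n := i.+1)) //= -[X in X <= _]addr0 lerD //; last first.
  by apply: sumr_ge0 => m _; rewrite mulr_ge0 ?tail_weight_ge0 ?inv_weight_ge0.
apply: (@le_trans _ _ (1 - p ^+ (j - i))).
  by rewrite lerD2l lerN2 -[X in _ <= X]expr1 ler_wiXn2l ?ltW //; lia.
have -> : 1 - p ^+ (j - i) =
    \sum_(0 <= m < i.+1) tail_weight m * (p ^+ (i - m) - p ^+ (j - m)).
  rewrite -[LHS]mul1r -{1}(sum_tail_weight i) mulr_suml.
  apply: eq_big_nat => m /andP[_ m_le].
  by rewrite (_ : j - m = i - m + (j - i))%N ?exprD; [ring | lia].
apply: ler_sum_nat => m /andP[_ m_le]; rewrite ler_wpM2l ?tail_weight_ge0 //.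
have tail_mi : i \in tail m by rewrite inE; lia.
have tail_mj : j \in tail m by rewrite inE; lia.
by have := inv_weight_ge_pair p_gt0 p_lt1 tail_mi tail_mj lt_ij lt_sji; rewrite !lrank1_tail.
Qed.

Lemma Jinf_lamstar : Jinf p (@lamstar R K p) = J_opt.
Proof.
apply/le_anti/andP; split; first exact: Jinf_le_optimum lamstar_distr.
by apply: (le_Jinf (adj_neq1 ord0)) => s; apply: Dlam_lamstar_ge.
Qed.

Lemma Jstar_eq : @Jstar R K p = J_opt.
Proof.
rewrite /Jstar; set E := [set J | _]%classic.
have E_ub : ubound E J_opt.
  by move=> _ [lam [lam_distr ->]]; apply: Jinf_le_optimum.
have E_opt : E J_opt.
  by exists (lamstar p); rewrite Jinf_lamstar; split=> //; apply: lamstar_distr.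
apply/le_anti/andP; split; first by apply: ge_sup E_ub; exists J_opt.
by apply: ub_le_sup E_opt; exists J_opt.
Qed.

End Extremal.

Theorem mainTheorem8 (R : realType) (K : nat) (p : R) :
  (2 <= K)%N -> 0 < p < 1 ->
  @Jstar R K p = ln (p^-1) * ((1 - p) / (K%:R - 1 + p)) /\
  @is_distr R K (@lamstar R K p) /\
  @Jinf R K p (@lamstar R K p) = ln (p^-1) * ((1 - p) / (K%:R - 1 + p)).
Proof.
case: K => [|[|n]] // _ /andP[p_gt0 p_lt1]; rewrite natK_den.
by split; [|split]; [apply: Jstar_eq | apply: lamstar_distr | apply: Jinf_lamstar].
Qed.
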